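(* Let $W:\mathbb{N}\to\mathbb{R}$ be increasing with $W(N)\to\infty$, and let $(x_n)_{n\in\mathbb{N}}$ be a bounded complex sequence. Suppose $L=\lim_{N\to\infty}\frac{W(N-1)}{W(N)}$ exists and $L\in(0,1)$. For $n\ge0$ let $\lambda_n=L^n-L^{n+1}$. Then \[ \frac{1}{W(N)}\sum_{n=1}^{N}\Delta W(n)\,x_n=\sum_{k=0}^{N}\lambda_k x_{N-k}+o(1)\qquad (N\to\infty), \] where $\Delta W(n)=W(n)-W(n-1)$.
   Context: $\mathbb{N}=\{0,1,2,\dots\}$. The left side is the $N$-th $W$-weighted average $\mathbb{E}^W_{n\le N}x_n$ (defined for $N$ large enough that $W(N)\neq 0$). *)

From Stdlib Require Import Reals.
From Coquelicot Require Import Coquelicot.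
Open Scope R_scope.

Definition DeltaW (W : nat -> R) (n : nat) : R := W n - W (n - 1)%nat.

Definition lam (L : R) (n : nat) : R := L ^ n - L ^ (S n).

Definition Wavg (W : nat -> R) (x : nat -> C) (N : nat) : C :=
  Cmult (RtoC (/ W N)) (sum_n_m (fun n => Cmult (RtoC (DeltaW W n)) (x n)) 1 N).

Definition lamsum (L : R) (x : nat -> C) (N : nat) : C :=
  sum_n_m (fun k => Cmult (RtoC (lam L k)) (x (N - k)%nat)) 0 N.

(* Both averages are linear combinations [sum_(n <= N) c_N(n) x_n], with weights
   [ΔW(n)/W(N)] and [λ_(N-n)], so it suffices that the l1-distance of the two weight
   vectors tends to 0.  Since [W(N-k)/W(N) -> L^k], the weight [ΔW(N-k)/W(N)] tends to
   [λ_k] for each fixed [k]: the last [K] terms of the distance vanish in the limit.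
   The remaining terms are bounded by the total mass of both weight vectors on
   [n <= N-K], which telescopes to [(W(N-K) - W(0))/W(N) + L^K -> 2 L^K], and this is
   small for [K] large. *)
From Stdlib Require Import Reals Lia Lra.
From Coquelicot Require Import Coquelicot.
Open Scope R_scope.

Lemma sum_n_m_rev {G : AbelianMonoid} (f : nat -> G) (N : nat) :
  sum_n_m f 0 N = sum_n_m (fun k => f (N - k)%nat) 0 N.
Proof.
  revert f; induction N as [|N IH]; intro f.
  - now rewrite !sum_n_n.
  - rewrite sum_Sn_m, <- sum_n_m_S, IH, sum_n_Sm, plus_comm by lia.
    f_equal; [apply sum_n_m_ext_loc; intros k Hk|]; f_equal; lia.
Qed.

Lemma Cmod_sum_n_m_le (u : nat -> C) (m : nat) :
  Cmod (sum_n_m u 0 m) <= sum_n_m (fun k => Cmod (u k)) 0 m.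
Proof.
  induction m as [|m IH].
  - rewrite !sum_n_n. lra.
  - rewrite !sum_n_Sm by lia. eapply Rle_trans; [apply Cmod_triangle|].
    change plus with Rplus. lra.
Qed.

Lemma sum_n_m_DeltaW (W : nat -> R) (m : nat) :
  sum_n_m (DeltaW W) 1 m = W m - W 0%nat.
Proof.
  induction m as [|m IH].
  - rewrite sum_n_m_zero by lia. change (zero : R) with 0. lra.
  - rewrite sum_n_Sm, IH by lia. change plus with Rplus. unfold DeltaW.
    replace (S m - 1)%nat with m by lia. lra.
Qed.

Lemma sum_n_m_lam_shift (L : R) (K m : nat) :
  sum_n_m (fun k => lam L (K + k)) 0 m = L ^ K - L ^ (K + S m).
Proof.
  induction m as [|m IH].
  - rewrite sum_n_n. unfold lam. now rewrite Nat.add_0_r, Nat.add_1_r.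
  - rewrite sum_n_Sm, IH by lia. change plus with Rplus. unfold lam.
    replace (S (K + S m)) with (K + S (S m))%nat by lia. lra.
Qed.

Lemma lam_ge0 (L : R) (k : nat) : 0 <= L <= 1 -> 0 <= lam L k.
Proof.
  intros HL. unfold lam. simpl. pose proof (pow_le L k ltac:(lra)). nra.
Qed.

Lemma is_lim_seq_0_of_bounds (s c : nat -> R) :
  (forall n, 0 <= s n) -> is_lim_seq c 0 ->
  (forall K, exists u, is_lim_seq u (c K) /\ eventually (fun n => s n <= u n)) ->
  is_lim_seq s 0.
Proof.
  intros Hs Hc Hu. apply is_lim_seq_spec. intro eps.
  assert (Heps2 : 0 < eps / 2) by (pose proof (cond_pos eps); lra).
  apply is_lim_seq_spec in Hc. destruct (Hc (mkposreal _ Heps2)) as [K HK].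
  specialize (HK K (le_n K)). simpl in HK. rewrite Rminus_0_r in HK.
  destruct (Hu K) as [u [Hlim [N1 Hsu]]].
  apply is_lim_seq_spec in Hlim. destruct (Hlim (mkposreal _ Heps2)) as [N2 HN2].
  exists (N1 + N2)%nat. intros n Hn.
  specialize (Hsu n ltac:(lia)). specialize (HN2 n ltac:(lia)). simpl in HN2.
  pose proof (Hs n). rewrite Rminus_0_r, Rabs_pos_eq by lra.
  apply Rabs_def2 in HK, HN2. lra.
Qed.

(* [Wavg] sums from [n = 1], hence the zero weight of [x_0]. *)
Definition Wweight (W : nat -> R) (N n : nat) : R :=
  match n with O => 0 | S _ => DeltaW W n / W N end.

Definition Wgap (W : nat -> R) (L : R) (N n : nat) : R :=
  Rabs (Wweight W N n - lam L (N - n)).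

Lemma lamsum_rev (L : R) (x : nat -> C) (N : nat) :
  lamsum L x N = sum_n_m (fun n => Cmult (RtoC (lam L (N - n))) (x n)) 0 N.
Proof.
  unfold lamsum. rewrite sum_n_m_rev.
  apply sum_n_m_ext_loc. intros n Hn. now replace (N - (N - n))%nat with n by lia.
Qed.

Lemma Wavg_weighted_sum (W : nat -> R) (x : nat -> C) (N : nat) :
  Wavg W x N = sum_n_m (fun n => Cmult (RtoC (Wweight W N n)) (x n)) 0 N.
Proof.
  unfold Wavg. rewrite <- (sum_n_m_mult_l (K := C_Ring)), (sum_Sn_m _ 0) by lia.
  simpl Wweight. replace (Cmult (RtoC 0) (x O)) with (zero : C)
    by (apply injective_projections; simpl; ring).
  rewrite plus_zero_l. apply sum_n_m_ext_loc. intros [|n] Hn; [lia|].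
  change mult with Cmult. simpl Wweight. unfold Rdiv.
  now rewrite RtoC_mult, Cmult_assoc, (Cmult_comm (RtoC (DeltaW W (S n)))).
Qed.

Lemma Cmod_Wavg_minus_lamsum_le (W : nat -> R) (L : R) (x : nat -> C) (M : R) (N : nat) :
  (forall n, Cmod (x n) <= M) ->
  Cmod (Cminus (Wavg W x N) (lamsum L x N)) <= M * sum_n_m (Wgap W L N) 0 N.
Proof.
  intros HM. set (d n := Cmult (RtoC (Wweight W N n - lam L (N - n))) (x n)).
  assert (Hdiff : Cminus (Wavg W x N) (lamsum L x N) = sum_n_m d 0 N).
  { rewrite Wavg_weighted_sum, lamsum_rev,
      (sum_n_m_ext _ (fun n => plus (d n) (Cmult (RtoC (lam L (N - n))) (x n)))).
    - rewrite sum_n_m_plus. change plus with Cplus. unfold Cminus. ring.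
    - intro n. unfold d. change plus with Cplus.
      rewrite RtoC_minus, <- Cmult_plus_distr_r. f_equal. unfold Cminus. ring. }
  rewrite Hdiff. eapply Rle_trans; [apply Cmod_sum_n_m_le|].
  rewrite <- (sum_n_m_mult_l (K := R_Ring)). apply sum_n_m_le. intro n.
  unfold d. rewrite Cmod_mult, Cmod_R. change mult with Rmult.
  pose proof (HM n). pose proof (Rabs_pos (Wweight W N n - lam L (N - n))).
  unfold Wgap. nra.
Qed.

Section WeightConvergence.

Variables (W : nat -> R) (L : R) (N0 : nat).
Hypothesis W_pos : forall n, (N0 <= n)%nat -> 0 < W n.
Hypothesis W_ratio : is_lim_seq (fun N => W (N - 1)%nat / W N) L.

Lemma is_lim_seq_W_ratio_pow (k : nat) :
  is_lim_seq (fun N => W (N - k)%nat / W N) (L ^ k).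
Proof.
  induction k as [|k IH].
  - apply is_lim_seq_ext_loc with (fun _ => 1); [|apply is_lim_seq_const].
    exists N0. intros n Hn. rewrite Nat.sub_0_r. pose proof (W_pos n Hn). field. lra.
  - assert (ratio_shift : is_lim_seq (fun N => W (N - k - 1)%nat / W (N - k)%nat) L).
    { apply (is_lim_seq_incr_n _ k). eapply is_lim_seq_ext; [|exact W_ratio].
      intro n. now replace (n + k - k)%nat with n by lia. }
    apply is_lim_seq_ext_loc with
      (fun N => W (N - k - 1)%nat / W (N - k)%nat * (W (N - k)%nat / W N)).
    + exists (N0 + S k)%nat. intros n Hn.
      pose proof (W_pos (n - k)%nat ltac:(lia)). pose proof (W_pos n ltac:(lia)).
      replace (n - k - 1)%nat with (n - S k)%nat by lia. field. lra.
    + now apply is_lim_seq_mult'.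
Qed.

Lemma is_lim_seq_Wweight_from_end (k : nat) :
  is_lim_seq (fun N => Wweight W N (N - k)) (lam L k).
Proof.
  apply is_lim_seq_ext_loc with (fun N => W (N - k)%nat / W N - W (N - S k)%nat / W N).
  - exists (N0 + S k)%nat. intros n Hn.
    destruct (n - k)%nat as [|m] eqn:Hm; [lia|]. simpl Wweight. unfold DeltaW.
    replace (S m - 1)%nat with (n - S k)%nat by lia. unfold Rdiv. ring.
  - apply is_lim_seq_minus'; apply is_lim_seq_W_ratio_pow.
Qed.

Lemma is_lim_seq_Wgap_tail (K : nat) :
  is_lim_seq (fun N => sum_n_m (Wgap W L N) (N + 1 - K) N) 0.
Proof.
  induction K as [|K IH].
  - eapply is_lim_seq_ext; [|apply is_lim_seq_const].
    intro n. now rewrite sum_n_m_zero by lia.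
  - assert (gap_lim : is_lim_seq (fun N => Wgap W L N (N - K)) 0).
    { apply is_lim_seq_ext_loc with (fun N => Rabs (Wweight W N (N - K) - lam L K)).
      - exists K. intros n Hn. unfold Wgap. now replace (n - (n - K))%nat with K by lia.
      - replace (Finite 0) with (Rbar_abs (lam L K - lam L K))
          by (simpl; now rewrite Rminus_diag, Rabs_R0).
        apply is_lim_seq_abs, is_lim_seq_minus';
          [apply is_lim_seq_Wweight_from_end|apply is_lim_seq_const]. }
    apply is_lim_seq_ext_loc with
      (fun N => Wgap W L N (N - K) + sum_n_m (Wgap W L N) (N + 1 - K) N).
    + exists (S K). intros n Hn. rewrite (sum_Sn_m _ (n + 1 - S K)) by lia.
      replace (n + 1 - S K)%nat with (n - K)%nat by lia.
      now replace (S (n - K)) with (n + 1 - K)%nat by lia.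
    + replace (Finite 0) with (Finite (0 + 0)) by (f_equal; ring).
      now apply is_lim_seq_plus'.
Qed.

Hypothesis W_incr : forall n, W n <= W (S n).
Hypothesis L_range : 0 < L < 1.

Lemma sum_Wgap_head_le (K N : nat) :
  (K <= N)%nat -> (N0 <= N)%nat ->
  sum_n_m (Wgap W L N) 0 (N - K) <= (W (N - K)%nat - W 0%nat) / W N + L ^ K.
Proof.
  intros HKN HN. pose proof (W_pos N HN) as HWN.
  assert (weight_ge0 : forall n, 0 <= Wweight W N n).
  { intros [|n]; simpl; [lra|]. unfold DeltaW. rewrite Nat.sub_succ, Nat.sub_0_r.
    pose proof (W_incr n). apply Rdiv_le_0_compat; lra. }
  eapply Rle_trans.
  { apply sum_n_m_le with (b := fun n => Wweight W N n + lam L (N - n)).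
    intro n. unfold Wgap. pose proof (weight_ge0 n).
    pose proof (lam_ge0 L (N - n) ltac:(lra)). apply Rabs_le. lra. }
  rewrite (sum_n_m_plus (G := R_AbelianMonoid)). change plus with Rplus.
  apply Rplus_le_compat.
  - rewrite sum_Sn_m by lia. change plus with Rplus. simpl Wweight.
    rewrite (sum_n_m_ext_loc _ (fun n => mult (DeltaW W n) (/ W N))).
    + rewrite sum_n_m_mult_r, sum_n_m_DeltaW. change mult with Rmult.
      unfold Rdiv. lra.
    + intros [|n] Hn; [lia|]. reflexivity.
  - rewrite sum_n_m_rev, (sum_n_m_ext_loc _ (fun k => lam L (K + k))).
    + rewrite sum_n_m_lam_shift. pose proof (pow_lt L (K + S (N - K)) ltac:(lra)). lra.
    + intros k Hk. f_equal. lia.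
Qed.

Hypothesis W_unbounded : is_lim_seq W p_infty.

Lemma is_lim_seq_sum_Wgap : is_lim_seq (fun N => sum_n_m (Wgap W L N) 0 N) 0.
Proof.
  apply is_lim_seq_0_of_bounds with (c := fun K => 2 * L ^ K).
  - intro N. rewrite <- (sum_n_m_const_zero (G := R_AbelianMonoid) 0 N) at 1.
    apply sum_n_m_le. intro n. apply Rabs_pos.
  - replace (Finite 0) with (Rbar_mult 2 0) by (simpl; f_equal; ring).
    apply is_lim_seq_scal_l, is_lim_seq_geom. rewrite Rabs_pos_eq; lra.
  - intro K.
    exists (fun N => (W (N - K)%nat - W 0%nat) / W N + L ^ K
                   + sum_n_m (Wgap W L N) (N + 1 - K) N).
    split.
    + replace (2 * L ^ K) with (L ^ K - W 0%nat * 0 + L ^ K + 0) by ring.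
      apply is_lim_seq_plus'; [apply is_lim_seq_plus'|apply is_lim_seq_Wgap_tail];
        [|apply is_lim_seq_const].
      apply is_lim_seq_ext with (fun N => W (N - K)%nat / W N - W 0%nat * / W N).
      { intro n. unfold Rdiv. ring. }
      apply is_lim_seq_minus'; [apply is_lim_seq_W_ratio_pow|].
      apply is_lim_seq_mult'; [apply is_lim_seq_const|].
      replace (Finite 0) with (Rbar_inv p_infty) by reflexivity.
      now apply is_lim_seq_inv.
    + exists (K + N0)%nat. intros N HN.
      rewrite (sum_n_m_Chasles _ 0 (N - K) N) by lia.
      replace (S (N - K)) with (N + 1 - K)%nat by lia. change plus with Rplus.
      pose proof (sum_Wgap_head_le K N ltac:(lia) ltac:(lia)). lra.
Qed.

End WeightConvergence.

Theorem mainTheorem8 (W : nat -> R) (x : nat -> C) (L : R) :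
  (forall n : nat, W n <= W (S n)) ->
  is_lim_seq (fun N => W N) p_infty ->
  (exists M : R, forall n : nat, Cmod (x n) <= M) ->
  is_lim_seq (fun N : nat => W (N - 1)%nat / W N) L ->
  0 < L < 1 ->
  is_lim_seq (fun N : nat => Cmod (Cminus (Wavg W x N) (lamsum L x N))) 0.
Proof.
  intros W_incr W_unbounded [M HM] W_ratio L_range.
  destruct (proj2 (is_lim_seq_spec _ _) W_unbounded 0) as [N0 W_pos].
  apply is_lim_seq_le_le with (fun _ => 0) (fun N => M * sum_n_m (Wgap W L N) 0 N).
  - intro N. split; [apply Cmod_ge_0|]. now apply Cmod_Wavg_minus_lamsum_le.
  - apply is_lim_seq_const.
  - replace (Finite 0) with (Rbar_mult M 0) by (simpl; f_equal; ring).
    now apply is_lim_seq_scal_l, (is_lim_seq_sum_Wgap W L N0).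
Qed.
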